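(* Let $n\ge 1$, $\sigma>0$, $b>0$, $\mathbf{a}\in\mathbb{R}^n$, let $\mathbf{D}\in\mathbb{R}^{n\times n}$ be a diagonal matrix with positive diagonal entries, and let $\mathbf{e}\in\mathbb{R}^n$ be the all-ones vector. Consider the problem $$\min_{\mathbf{x}\in\mathbb{R}^n}\ f(\mathbf{x})=\mathbf{x}^T\mathbf{a}+\tfrac{\sigma}{2}\mathbf{x}^T\mathbf{D}\mathbf{x}+\tfrac{\sigma}{2}(\mathbf{e}^T\mathbf{x})^2\quad\text{subject to } 0\le \mathbf{x}\le b\,\mathbf{e}.$$ Define $F:\mathbb{R}\to\mathbb{R}$ by $F(\tau)=\tau-\mathbf{e}^T P\big[-\tfrac{1}{\sigma}\mathbf{D}^{-1}(\mathbf{a}+\sigma\tau\mathbf{e});0,b\big]$. Let $\tau^*$ be a root of $F$, and set $\mathbf{x}^*=P\big[-\tfrac{1}{\sigma}\mathbf{D}^{-1}(\mathbf{a}+\sigma\tau^*\mathbf{e});0,b\big]$. Then $\mathbf{x}^*$ satisfies the first-order KKT condition $$\mathbf{x}^*-P\big[\mathbf{x}^*-\nabla f(\mathbf{x}^* );0,b\big]=0 .$$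
   Context: For $\mathbf{z}\in\mathbb{R}^n$, $P[\mathbf{z};0,b]$ denotes the componentwise projection of $\mathbf{z}$ onto the box $[0,b]^n$, i.e. $(P[\mathbf{z};0,b])_i=\min(\max(z_i,0),b)$. *)

From mathcomp Require Import all_boot all_order all_algebra.
Unset Printing Implicit Defensive.
Import Order.TTheory GRing.Theory Num.Theory.
Local Open Scope ring_scope.

Definition boxproj {R : realFieldType} {n : nat} (z : 'cV[R]_n) (b : R) : 'cV[R]_n :=
  \col_i Num.min (Num.max (z i 0) 0) b.

Definition ones (R : realFieldType) (n : nat) : 'cV[R]_n := const_mx 1.

Definition esum {R : realFieldType} {n : nat} (x : 'cV[R]_n) : R := \sum_i x i 0.

Definition fobj {R : realFieldType} {n : nat} (a : 'cV[R]_n) (D : 'M[R]_n)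
  (sigma : R) (x : 'cV[R]_n) : R :=
  (x^T *m a) 0 0 + sigma / 2 * (x^T *m D *m x) 0 0 + sigma / 2 * (esum x) ^+ 2.

(* Gradient of fobj for symmetric (here diagonal) D:
   grad f(x) = a + sigma D x + sigma (e^T x) e *)
Definition grad_f {R : realFieldType} {n : nat} (a : 'cV[R]_n) (D : 'M[R]_n)
  (sigma : R) (x : 'cV[R]_n) : 'cV[R]_n :=
  a + sigma *: (D *m x) + (sigma * esum x) *: (ones R n).

Definition xtau {R : realFieldType} {n : nat} (a : 'cV[R]_n) (D : 'M[R]_n)
  (sigma b tau : R) : 'cV[R]_n :=
  boxproj (- (sigma^-1) *: (invmx D *m (a + (sigma * tau) *: (ones R n)))) b.

Definition Ffun {R : realFieldType} {n : nat} (a : 'cV[R]_n) (D : 'M[R]_n)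
  (sigma b tau : R) : R :=
  tau - esum (xtau a D sigma b tau).

From mathcomp Require Import all_boot all_order all_algebra.
From mathcomp Require Import ring lra.
Import Order.TTheory GRing.Theory Num.Theory.
Local Open Scope ring_scope.

(* Everything decouples coordinatewise.  At a root tau of F the point
   x = P[y; 0, b], with y = -(1/sigma) D^{-1} (a + sigma tau e), satisfies
   e^T x = tau, so grad f(x) = sigma D (x - y) is a positive diagonal
   rescaling of x - y.  Each coordinate of the KKT residual then reduces to
   the scalar fact that P[y] is a fixed point of the projected step
   z |-> P[z - c (z - y)] for every c >= 0. *)

Definition clamp {R : realDomainType} (lo hi y : R) : R :=
  Num.min (Num.max y lo) hi.

Section Clamp.

Variables (R : realDomainType) (lo hi : R).
Hypothesis lo_le_hi : lo <= hi.

Lemma clamp_id (x : R) : lo <= x <= hi -> clamp lo hi x = x.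
Proof. by case/andP=> lox xhi; rewrite /clamp max_l // min_l. Qed.

Lemma clamp_le_lo (y : R) : y <= lo -> clamp lo hi y = lo.
Proof. by move=> ylo; rewrite /clamp max_r // min_l. Qed.

Lemma clamp_ge_hi (y : R) : hi <= y -> clamp lo hi y = hi.
Proof. by move=> hiy; rewrite /clamp max_l ?min_r //; apply: le_trans hiy. Qed.

Lemma clamp_projected_step (c y : R) : 0 <= c ->
  clamp lo hi (clamp lo hi y - c * (clamp lo hi y - y)) = clamp lo hi y.
Proof.
move=> c_ge0; have [ylo|loy] := lerP y lo.
  by rewrite clamp_le_lo // clamp_le_lo //; nra.
have [hiy|yhi] := lerP hi y.
  by rewrite clamp_ge_hi // clamp_ge_hi //; nra.
have y_in : lo <= y <= hi by rewrite !ltW.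
by rewrite [clamp _ _ y]clamp_id // subrr mulr0 subr0 clamp_id.
Qed.

End Clamp.

Lemma boxprojE (R : realFieldType) (n : nat) (z : 'cV[R]_n) (b : R) (i : 'I_n) :
  boxproj z b i 0 = clamp 0 b (z i 0).
Proof. by rewrite mxE. Qed.

Section DiagonalMatrix.

Variables (R : fieldType) (n : nat) (D : 'M[R]_n).
Hypothesis D_diag : is_diag_mx D.

Lemma diag_mulmxE (x : 'cV[R]_n) (i : 'I_n) : (D *m x) i 0 = D i i * x i 0.
Proof. by case/diag_mxP: D_diag => d ->; rewrite mul_diag_mx !mxE eqxx mulr1n. Qed.

Hypothesis D_neq0 : forall i : 'I_n, D i i != 0.

Lemma diag_unitmx : D \in unitmx.
Proof.
by rewrite unitmxE det_trig ?is_diag_mx_is_trig // unitfE; apply/prodf_neq0.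
Qed.

Lemma diag_invmx_mulmxE (u : 'cV[R]_n) (i : 'I_n) :
  (invmx D *m u) i 0 = (D i i)^-1 * u i 0.
Proof. by rewrite -{2}(mulKVmx diag_unitmx u) diag_mulmxE mulKf. Qed.

End DiagonalMatrix.

Theorem lemma4p1 (R : realFieldType) (n : nat) (hn : (1 <= n)%N)
  (sigma b : R) (hsigma : 0 < sigma) (hb : 0 < b)
  (a : 'cV[R]_n) (D : 'M[R]_n)
  (hDdiag : is_diag_mx D) (hDpos : forall i : 'I_n, 0 < D i i)
  (taustar : R) (hroot : Ffun a D sigma b taustar = 0) :
  let xstar := xtau a D sigma b taustar in
  xstar - boxproj (xstar - grad_f a D sigma xstar) b = 0.
Proof.
move=> xstar; have esum_xstar : esum xstar = taustar by apply/esym/subr0_eq.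
apply/eqP; rewrite subr_eq0; apply/eqP/matrixP => i j; rewrite (ord1 j) {j}.
set y := - sigma^-1 * ((D i i)^-1 * (a i 0 + sigma * taustar)).
have xstar_i : xstar i 0 = clamp 0 b y.
  rewrite /xstar /xtau boxprojE [(_ *: _ : 'cV_n) i 0]mxE.
  by rewrite diag_invmx_mulmxE // => [|k]; rewrite ?mxE ?mulr1 // lt0r_neq0.
clearbody xstar.
have grad_i : grad_f a D sigma xstar i 0 = sigma * D i i * (xstar i 0 - y).
  have Dii_neq0 := lt0r_neq0 (hDpos i); have sigma_neq0 := lt0r_neq0 hsigma.
  move: (diag_mulmxE _ _ _ hDdiag xstar i); rewrite /grad_f !mxE => ->.
  by rewrite esum_xstar mulr1 /y; field; apply/andP.
rewrite boxprojE 2!mxE grad_i xstar_i clamp_projected_step ?(ltW hb) //.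
exact/ltW/mulr_gt0.
Qed.
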